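(* Let $(E\to M,\rho,\langle\cdot,\cdot\rangle,\circ)$ be a Courant algebroid and let $(\mathbf I,\mathbf J,\mathbf K)$ be an almost hypercomplex structure on $E$. The following assertions are equivalent: (i) $N_{\mathbf I,\mathbf J}=N_{\mathbf J,\mathbf J}=0$; (ii) $N_{\mathbf I,\mathbf J}=0$; (iii) $(\mathbf I,\mathbf J,\mathbf K)$ is a hypercomplex structure, i.e. all six Nijenhuis concomitants $N_{\mathbf I,\mathbf I},N_{\mathbf J,\mathbf J},N_{\mathbf K,\mathbf K},N_{\mathbf I,\mathbf J},N_{\mathbf J,\mathbf K},N_{\mathbf K,\mathbf I}$ vanish; (iv) there exists a hypercomplex connection $\nabla$ such that $\nabla\mathbf I=\nabla\mathbf J=\nabla\mathbf K=0$ and, for all $X,Y\in\Gamma(E)$, $$T(X,Y)=\mathbf I\,D\langle X,\mathbf I Y\rangle+\mathbf J\,D\langle X,\mathbf J Y\rangle+\mathbf K\,D\langle X,\mathbf K Y\rangle;\qquad(\ast)$$ (v) there exists a hypercomplex connection satisfying $\nabla\mathbf I=\nabla\mathbf J=\nabla\mathbf K=0$ and $(\ast)$; it is unique and given by $$\nabla_XY=-\tfrac12\mathbf K\big(\mathbf JY\circ\mathbf IX-\mathbf J(Y\circ\mathbf IX)-\mathbf I(\mathbf JY\circ X)+\mathbf J\mathbf I(Y\circ X)\big).$$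
   Context: A Courant algebroid $(E\to M,\rho,\langle\cdot,\cdot\rangle,\circ)$ consists of a real vector bundle $E\to M$ over a smooth manifold, a nondegenerate symmetric fiberwise bilinear pairing $\langle\cdot,\cdot\rangle$ on $E$, a vector bundle map $\rho:E\to TM$ (the anchor), and an $\mathbb R$-bilinear operation $\circ$ on $\Gamma(E)$ (the Dorfman bracket) such that for all $f\in C^\infty(M)$, $x,y,z\in\Gamma(E)$: $x\circ(y\circ z)=(x\circ y)\circ z+y\circ(x\circ z)$; $\rho(x\circ y)=[\rho(x),\rho(y)]$; $x\circ(fy)=(\rho(x)f)y+f(x\circ y)$; $x\circ y+y\circ x=2D\langle x,y\rangle$; $(Df)\circ x=0$; $\rho(x)\langle y,z\rangle=\langle x\circ y,z\rangle+\langle y,x\circ z\rangle$. Here $D:C^\infty(M)\to\Gamma(E)$ is the $\mathbb R$-linear map defined by $\langle Df,x\rangle=\tfrac12\rho(x)f$. The Courant bracket is $[\![x,y]\!]=\tfrac12(x\circ y-y\circ x)$, so $x\circ y=[\![x,y]\!]+D\langle x,y\rangle$. For vector bundle endomorphisms $F,G$ of $E$ (over $\mathrm{id}_M$), the Nijenhuis concomitant is the tensor $N_{F,G}:E\otimes E\to E$ given by $N_{F,G}(X,Y)=FX\circ GY-F(X\circ GY)-G(FX\circ Y)+FG(X\circ Y)+GX\circ FY-G(X\circ FY)-F(GX\circ Y)+GF(X\circ Y)$. An almost hypercomplex structure on $E$ is a triple $(\mathbf I,\mathbf J,\mathbf K)$ of vector bundle endomorphisms of $E$ over $\mathrm{id}_M$,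 each orthogonal for $\langle\cdot,\cdot\rangle$, with $\mathbf I^2=\mathbf J^2=\mathbf K^2=\mathbf I\mathbf J\mathbf K=-1$. It is a hypercomplex structure if $N_{\mathbf I,\mathbf I},N_{\mathbf J,\mathbf J},N_{\mathbf K,\mathbf K},N_{\mathbf I,\mathbf J},N_{\mathbf J,\mathbf K},N_{\mathbf K,\mathbf I}$ all vanish. Given an almost hypercomplex structure, for $f\in C^\infty(M)$ and $X,Y\in\Gamma(E)$ set $\Delta_f(X,Y)=\langle X,Y\rangle Df+\langle\mathbf IX,Y\rangle\mathbf I Df+\langle\mathbf JX,Y\rangle\mathbf JDf+\langle\mathbf KX,Y\rangle\mathbf KDf$. A hypercomplex connection is an $\mathbb R$-bilinear map $\Gamma(E)\times\Gamma(E)\to\Gamma(E)$, $(X,Y)\mapsto\nabla_XY$, with $\nabla_{fX}Y=f\nabla_XY$ and $\nabla_X(fY)=(\rho(X)f)Y+f\nabla_XY-\Delta_f(X,Y)$ for all $f,X,Y$. Its torsion is $T(X,Y)=\nabla_XY-\nabla_YX-[\![X,Y]\!]$. For an endomorphism $P$ of $E$, $(\nabla_XP)Y:=\nabla_X(PY)-P(\nabla_XY)$, and $\nabla P=0$ means $(\nabla_XP)Y=0$ for all $X,Y$. *)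

(* Algebraic (Serre–Swan style) model of a Courant algebroid:
   A  plays the role of C^oo(M) (a commutative R-algebra, R a real field),
   E  plays the role of Gamma(E) (an A-module),
   vector fields are R-linear derivations of A, acting via the anchor. *)
From HB Require Import structures.
From mathcomp Require Import all_boot all_order all_algebra.
Set Implicit Arguments. Unset Strict Implicit. Unset Printing Implicit Defensive.
Import GRing.Theory Num.Theory.
Local Open Scope ring_scope.

Section Defs.
Variables (R : realFieldType) (A : comAlgType R) (E : lmodType A).

Definition half : A := ((2%:R : R)^-1)%:A.

(* A-linear maps E -> E (= vector bundle endomorphisms over id_M) *)
Definition Alinear (F : E -> E) : Prop :=
  forall (f : A) (x y : E), F (f *: x + y) = f *: F x + F y.

Record CourantAlgebroid := {
  pairing : E -> E -> A;
  anchor  : E -> A -> A;            (* rho(x) acting as a derivation on A *)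
  dorf    : E -> E -> E;
  Dop     : A -> E;
  (* pairing: symmetric, A-bilinear, nondegenerate (fiberwise: E ~ E^* ) *)
  pairing_sym : forall x y, pairing x y = pairing y x;
  pairing_lin : forall f x y z, pairing (f *: x + y) z = f * pairing x z + pairing y z;
  pairing_nondeg : forall x, (forall y, pairing x y = 0) -> x = 0;
  pairing_surj : forall phi : E -> A,
      (forall f x y, phi (f *: x + y) = f * phi x + phi y) ->
      exists x, forall y, pairing x y = phi y;
  (* anchor: A-linear bundle map into vector fields = R-linear derivations of A *)
  anchor_lin : forall f x y g, anchor (f *: x + y) g = f * anchor x g + anchor y g;
  anchor_add : forall x g h, anchor x (g + h) = anchor x g + anchor x h;
  anchor_scal : forall x (r : R) g, anchor x (r%:A * g) = r%:A * anchor x g;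
  anchor_leibniz : forall x g h, anchor x (g * h) = anchor x g * h + g * anchor x h;
  dorf_addl : forall x y z, dorf (x + y) z = dorf x z + dorf y z;
  dorf_addr : forall x y z, dorf x (y + z) = dorf x y + dorf x z;
  dorf_scall : forall (r : R) x y, dorf (r%:A *: x) y = r%:A *: dorf x y;
  dorf_scalr : forall (r : R) x y, dorf x (r%:A *: y) = r%:A *: dorf x y;
  ca_jacobi : forall x y z, dorf x (dorf y z) = dorf (dorf x y) z + dorf y (dorf x z);
  ca_anchor_hom : forall x y g,
      anchor (dorf x y) g = anchor x (anchor y g) - anchor y (anchor x g);
  ca_leibniz : forall x y f, dorf x (f *: y) = anchor x f *: y + f *: dorf x y;
  ca_sym : forall x y, dorf x y + dorf y x = 2%:R *: Dop (pairing x y);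
  ca_Dker : forall f x, dorf (Dop f) x = 0;
  ca_invariance : forall x y z,
      anchor x (pairing y z) = pairing (dorf x y) z + pairing y (dorf x z);
  ca_D_def : forall f x, pairing (Dop f) x = half * anchor x f
}.

Variable C : CourantAlgebroid.


Definition courant (x y : E) : E := half *: (dorf C x y - dorf C y x).

Definition nijenhuis (F G : E -> E) (X Y : E) : E :=
  dorf C (F X) (G Y) - F (dorf C X (G Y)) - G (dorf C (F X) Y) + F (G (dorf C X Y))
  + dorf C (G X) (F Y) - G (dorf C X (F Y)) - F (dorf C (G X) Y) + G (F (dorf C X Y)).

Definition nij_vanish (F G : E -> E) : Prop := forall X Y, nijenhuis F G X Y = 0.

Definition orthogonal (F : E -> E) : Prop :=
  forall x y, pairing C (F x) (F y) = pairing C x y.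

Definition almost_hypercomplex (I J K : E -> E) : Prop :=
  [/\ Alinear I, Alinear J, Alinear K,
      (orthogonal I /\ orthogonal J /\ orthogonal K) &
      forall x, [/\ I (I x) = - x, J (J x) = - x, K (K x) = - x & I (J (K x)) = - x]].

Definition hypercomplex (I J K : E -> E) : Prop :=
  almost_hypercomplex I J K /\
  (nij_vanish I I /\ nij_vanish J J /\ nij_vanish K K /\
   nij_vanish I J /\ nij_vanish J K /\ nij_vanish K I).

Definition Delta (I J K : E -> E) (f : A) (X Y : E) : E :=
  pairing C X Y *: Dop C f + pairing C (I X) Y *: I (Dop C f)
  + pairing C (J X) Y *: J (Dop C f) + pairing C (K X) Y *: K (Dop C f).

Definition hypercomplex_connection (I J K : E -> E) (nab : E -> E -> E) : Prop :=
  [/\ (forall X X' Y, nab (X + X') Y = nab X Y + nab X' Y),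
      (forall X Y Y', nab X (Y + Y') = nab X Y + nab X Y'),
      (forall (r : R) X Y, nab X (r%:A *: Y) = r%:A *: nab X Y),
      (forall f X Y, nab (f *: X) Y = f *: nab X Y) &
      (forall f X Y, nab X (f *: Y) = anchor C X f *: Y + f *: nab X Y - Delta I J K f X Y)].

Definition torsion (nab : E -> E -> E) (X Y : E) : E :=
  nab X Y - nab Y X - courant X Y.

Definition parallel (nab : E -> E -> E) (P : E -> E) : Prop :=
  forall X Y, nab X (P Y) - P (nab X Y) = 0.

Definition torsion_star (I J K : E -> E) (nab : E -> E -> E) : Prop :=
  forall X Y, torsion nab X Y =
    I (Dop C (pairing C X (I Y))) + J (Dop C (pairing C X (J Y)))
    + K (Dop C (pairing C X (K Y))).

Definition good_connection (I J K : E -> E) (nab : E -> E -> E) : Prop :=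
  [/\ hypercomplex_connection I J K nab, parallel nab I, parallel nab J,
      parallel nab K & torsion_star I J K nab].

Definition nabla0 (I J K : E -> E) (X Y : E) : E :=
  - (half *: K (dorf C (J Y) (I X) - J (dorf C Y (I X))
                - I (dorf C (J Y) X) + J (I (dorf C Y X)))).

End Defs.

(* Every identity in the argument becomes, after pushing I, J, K through
   sums and using the quaternion relations (IJ = K, JK = I, KI = J, ...)
   and the skewness <P x, y> = - <x, P y> of P in {I,J,K}, an integer
   linear relation between finitely many "atoms" of E.  The core is the bilinear expression
   B X Y with nabla0 X Y = -1/2 K (B X Y):
   - nabla0 is always a hypercomplex connection with J parallel;
   - if N_{I,J} = 0, then I and K are parallel, the torsion satisfies (star)
     and all six Nijenhuis concomitants vanish;
   - conversely, for any connection as in (iv) the Dorfman bracket is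
     determined by nab, which forces N_{I,J} = N_{J,J} = 0 and nab = nabla0. *)
From HB Require Import structures.
From mathcomp Require Import all_boot all_order all_algebra.
Import GRing.Theory Num.Theory.
Local Open Scope ring_scope.
Set Implicit Arguments. Unset Strict Implicit.

Inductive zexpr :=
  | ZAtom of nat | ZZero | ZAdd of zexpr & zexpr | ZOpp of zexpr
  | ZMulz of zexpr & int | ZMuln of zexpr & nat.

(* Normal form: the list of coefficients of the atoms 0, 1, 2, ... *)
Fixpoint add_coeffs (c d : seq int) : seq int :=
  match c, d with
  | [::], _ => d
  | _, [::] => c
  | a :: c', b :: d' => (a + b) :: add_coeffs c' d'
  end.
Definition scale_coeffs (z : int) (c : seq int) := map (fun a => a * z) c.
Definition atom_coeffs n : seq int := rcons (nseq n 0) 1.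
Fixpoint coeffs e :=
  match e with
  | ZAtom n => atom_coeffs n
  | ZZero => [::]
  | ZAdd a b => add_coeffs (coeffs a) (coeffs b)
  | ZOpp a => scale_coeffs (-1) (coeffs a)
  | ZMulz a z => scale_coeffs z (coeffs a)
  | ZMuln a n => scale_coeffs n%:Z (coeffs a)
  end.

Section ZmodNormalization.
Variable V : zmodType.

Fixpoint zeval (env : seq V) (e : zexpr) : V :=
  match e with
  | ZAtom n => nth 0 env n
  | ZZero => 0
  | ZAdd a b => zeval env a + zeval env b
  | ZOpp a => - zeval env a
  | ZMulz a z => zeval env a *~ z
  | ZMuln a n => zeval env a *+ n
  end.
Fixpoint eval_coeffs (env : seq V) (c : seq int) : V :=
  match c with
  | [::] => 0
  | a :: c' => head 0 env *~ a + eval_coeffs (behead env) c'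
  end.

Lemma eval_add_coeffs env c d :
  eval_coeffs env (add_coeffs c d) = eval_coeffs env c + eval_coeffs env d.
Proof.
elim: c d env => [|a c IH] [|b d] env /=; rewrite ?addr0 ?add0r //.
by rewrite IH mulrzDr addrACA.
Qed.

Lemma eval_scale_coeffs env z c :
  eval_coeffs env (scale_coeffs z c) = eval_coeffs env c *~ z.
Proof.
elim: c env => [|a c IH] env /=; first by rewrite mul0rz.
by rewrite IH mulrzDl mulrzA.
Qed.

Lemma eval_atom_coeffs env n : eval_coeffs env (atom_coeffs n) = nth 0 env n.
Proof.
elim: n env => [|n IH] [|x env] /=; rewrite ?mulr1z ?addr0 //.
- by rewrite /atom_coeffs /= -/(atom_coeffs n) IH mulr0z add0r nth_nil.
- by rewrite /atom_coeffs /= -/(atom_coeffs n) IH mulr0z add0r.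
Qed.

Lemma zeval_coeffs env e : zeval env e = eval_coeffs env (coeffs e).
Proof.
elim: e => [n||a IHa b IHb|a IHa|a IHa z|a IHa n] /=.
- by rewrite eval_atom_coeffs.
- by [].
- by rewrite eval_add_coeffs IHa IHb.
- by rewrite eval_scale_coeffs IHa -mulrN1z.
- by rewrite eval_scale_coeffs IHa.
- by rewrite eval_scale_coeffs IHa.
Qed.

Lemma zeval_eq0 env e : all (eq_op^~ 0) (coeffs e) -> zeval env e = 0.
Proof.
rewrite zeval_coeffs; elim: (coeffs e) env => [|a c IH] env //=.
by case/andP=> /eqP -> /IH ->; rewrite mulr0z add0r.
Qed.

(* To show G = 0 it suffices that G - c H = 0 for a known relation H = 0:
   this is how linear combinations of hypotheses are used. *)
Lemma sub_relation (G H : V) (c : int) : H = 0 -> G - H *~ c = 0 -> G = 0.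
Proof. by move=> ->; rewrite mul0rz subr0. Qed.

Lemma subr0_eq (G H : V) : G - H = 0 -> G = H.
Proof. by move/eqP; rewrite subr_eq0 => /eqP. Qed.

Lemma eq_subr0 (G H : V) : G = H -> G - H = 0.
Proof. by move=> ->; rewrite subrr. Qed.

Lemma double_eq0 (x : V) : x = x + x -> x = 0.
Proof. by move=> h; apply: (addrI x); rewrite addr0 -h. Qed.
End ZmodNormalization.

Ltac zlookup x l :=
  lazymatch l with
  | (?y :: ?l') =>
      match constr:(true) with
      | _ => let r := constr:(ltac:(unify x y; exact 0%N) : nat) in r
      | _ => let n := zlookup x l' in constr:(n.+1)
      end
  end.
Ltac zmember x l :=
  lazymatch l with
  | nil => constr:(false)
  | (?y :: ?l') =>
      match constr:(true) with
      | _ => let r := constr:(ltac:(unify x y; exact true) : bool) in r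
      | _ => zmember x l'
      end
  end.
Ltac zatoms t l :=
  lazymatch t with
  | @GRing.add _ ?a ?b => let l1 := zatoms a l in zatoms b l1
  | @GRing.opp _ ?a => zatoms a l
  | @GRing.zero _ => l
  | @intmul _ ?a _ => zatoms a l
  | @GRing.natmul _ ?a _ => zatoms a l
  | _ => let b := zmember t l in
         lazymatch b with true => l | false => constr:(t :: l) end
  end.
Ltac zreify t l :=
  lazymatch t with
  | @GRing.add _ ?a ?b =>
      let x := zreify a l in let y := zreify b l in constr:(ZAdd x y)
  | @GRing.opp _ ?a => let x := zreify a l in constr:(ZOpp x)
  | @GRing.zero _ => constr:(ZZero)
  | @intmul _ ?a ?z => let x := zreify a l in constr:(ZMulz x z)
  | @GRing.natmul _ ?a ?n => let x := zreify a l in constr:(ZMuln x n)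
  | _ => let n := zlookup t l in constr:(ZAtom n)
  end.

(* zmod_zero proves t = 0 when t is an integer linear combination of atoms
   with all coefficients zero; zmod_eq proves the identity s = t. *)
Ltac zmod_zero :=
  lazymatch goal with |- ?t = 0 =>
    let T := type of t in
    let l := zatoms t (@nil T) in
    let e := zreify t l in
    change (@zeval _ l e = 0); apply: zeval_eq0; vm_compute; reflexivity
  end.
Ltac zmod_eq := apply: subr0_eq; zmod_zero.
Tactic Notation "use_relation" constr(h) uconstr(c) :=
  refine (sub_relation (c:=c) h _).

Section CourantAlgebra.
Variables (R : realFieldType) (A : comAlgType R) (E : lmodType A).

Section AlinearMaps.
Variable F : E -> E.
Hypothesis linF : Alinear F.

Lemma linD x y : F (x + y) = F x + F y.
Proof. by have := linF 1 x y; rewrite !scale1r. Qed.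
Lemma lin0 : F 0 = 0.
Proof. by apply: double_eq0; rewrite -linD addr0. Qed.
Lemma linN x : F (- x) = - F x.
Proof. by apply/eqP; rewrite -subr_eq0 opprK -linD addNr lin0. Qed.
Lemma linZ f x : F (f *: x) = f *: F x.
Proof. by have := linF f x 0; rewrite !addr0 lin0 addr0. Qed.
Lemma linMn x n : F (x *+ n) = F x *+ n.
Proof. by elim: n => [|n IH]; rewrite ?mulr0n ?lin0 // !mulrS linD IH. Qed.
Lemma lin_eq0 x : x = 0 -> F x = 0.
Proof. by move=> ->; rewrite lin0. Qed.
End AlinearMaps.

Lemma scalerC (a b : A) (v : E) : a *: (b *: v) = b *: (a *: v).
Proof. by rewrite !scalerA mulrC. Qed.

Lemma half_double (v : E) : half A *: (v *+ 2) = v.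
Proof.
rewrite -scalerMnr scalerMnl /half scalerMnl -mulr_natr mulVf ?scale1r //.
by rewrite pnatr_eq0.
Qed.

Variable C : CourantAlgebroid E.
Notation dorf := (dorf C).
Notation pairing := (pairing C).
Notation Dop := (Dop C).
Notation anchor := (anchor C).

Lemma pairingDl x y z : pairing (x + y) z = pairing x z + pairing y z.
Proof. by rewrite -[in LHS](scale1r x) pairing_lin mul1r. Qed.
Lemma pairing0l z : pairing 0 z = 0.
Proof. by apply: double_eq0; rewrite -pairingDl addr0. Qed.
Lemma pairingNl x z : pairing (- x) z = - pairing x z.
Proof. by apply/eqP; rewrite -subr_eq0 opprK -pairingDl addNr pairing0l. Qed.
Lemma pairingZl f x z : pairing (f *: x) z = f * pairing x z.
Proof. by have := pairing_lin C f x 0 z; rewrite addr0 pairing0l addr0. Qed.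
Lemma pairingNr x z : pairing x (- z) = - pairing x z.
Proof. by rewrite pairing_sym pairingNl pairing_sym. Qed.
Lemma pairingDr x y z : pairing z (x + y) = pairing z x + pairing z y.
Proof. by rewrite pairing_sym pairingDl !(pairing_sym _ z). Qed.

(* D is an additive derivation (by nondegeneracy of the pairing). *)
Lemma DopD f g : Dop (f + g) = Dop f + Dop g.
Proof.
apply/eqP; rewrite -subr_eq0; apply/eqP; apply: (@pairing_nondeg _ _ _ C) => z.
by rewrite pairingDl pairingNl pairingDl !ca_D_def anchor_add mulrDr; zmod_zero.
Qed.
Lemma Dop0 : Dop 0 = 0.
Proof. by apply: double_eq0; rewrite -DopD addr0. Qed.
Lemma DopN f : Dop (- f) = - Dop f.
Proof. by apply/eqP; rewrite -subr_eq0 opprK -DopD addNr Dop0. Qed.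
Lemma DopM f g : Dop (f * g) = f *: Dop g + g *: Dop f.
Proof.
apply/eqP; rewrite -subr_eq0; apply/eqP; apply: (@pairing_nondeg _ _ _ C) => z.
rewrite pairingDl pairingNl pairingDl !pairingZl !ca_D_def anchor_leibniz.
by rewrite mulrDr (mulrCA f) (mulrCA g) (mulrC (anchor z f)); zmod_zero.
Qed.

Lemma dorf0l z : dorf 0 z = 0.
Proof. by apply: double_eq0; rewrite -dorf_addl addr0. Qed.
Lemma dorf0r z : dorf z 0 = 0.
Proof. by apply: double_eq0; rewrite -dorf_addr addr0. Qed.
Lemma dorfNl x z : dorf (- x) z = - dorf x z.
Proof. by apply/eqP; rewrite -subr_eq0 opprK -dorf_addl addNr dorf0l. Qed.
Lemma dorfNr x z : dorf z (- x) = - dorf z x.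
Proof. by apply/eqP; rewrite -subr_eq0 opprK -dorf_addr addNr dorf0r. Qed.

Lemma dorf_sym x y : dorf x y + dorf y x = Dop (pairing x y) *+ 2.
Proof. by rewrite ca_sym scaler_nat. Qed.

Lemma dorfZl f x y :
  dorf (f *: x) y = f *: dorf x y - anchor y f *: x + (pairing x y *: Dop f) *+ 2.
Proof.
have sym_fx := dorf_sym (f *: x) y.
rewrite ca_leibniz in sym_fx.
have -> : dorf (f *: x) y =
    Dop (pairing (f *: x) y) *+ 2 - (anchor y f *: x + f *: dorf y x).
  by rewrite -sym_fx addrK.
have -> : dorf y x = Dop (pairing x y) *+ 2 - dorf x y.
  by rewrite pairing_sym -(dorf_sym y x) addrK.
rewrite pairingZl DopM scalerBr -!scalerMnr opprD opprB !mulrnDl.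
zmod_eq.
Qed.

Lemma pairing_skew (P : E -> E) : orthogonal C P -> (forall x, P (P x) = - x) ->
  forall a b, pairing (P a) b = - pairing a (P b).
Proof. by move=> orthP PP a b; rewrite -(orthP (P a)) PP pairingNl. Qed.

Section AlmostHypercomplex.
Variables I J K : E -> E.
Hypothesis hIJK : almost_hypercomplex C I J K.

Let linI : Alinear I. Proof. by case: hIJK. Qed.
Let linJ : Alinear J. Proof. by case: hIJK. Qed.
Let linK : Alinear K. Proof. by case: hIJK. Qed.
Let orthI : orthogonal C I. Proof. by case: hIJK => _ _ _ []. Qed.
Let orthJ : orthogonal C J. Proof. by case: hIJK => _ _ _ [] _ []. Qed.
Let orthK : orthogonal C K. Proof. by case: hIJK => _ _ _ [] _ []. Qed.

Lemma II x : I (I x) = - x. Proof. by case: hIJK => _ _ _ _ /(_ x) []. Qed.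
Lemma JJ x : J (J x) = - x. Proof. by case: hIJK => _ _ _ _ /(_ x) []. Qed.
Lemma KK x : K (K x) = - x. Proof. by case: hIJK => _ _ _ _ /(_ x) []. Qed.
Let IJK x : I (J (K x)) = - x. Proof. by case: hIJK => _ _ _ _ /(_ x) []. Qed.
Lemma IJ x : I (J x) = K x.
Proof. by have := IJK (K x); rewrite KK (linN linJ) (linN linI) => /oppr_inj. Qed.
Lemma JK x : J (K x) = I x.
Proof. by have := congr1 I (IJK x); rewrite II (linN linI) => /oppr_inj. Qed.
Lemma JI x : J (I x) = - K x. Proof. by rewrite -JK JJ. Qed.
Lemma KJ x : K (J x) = - I x. Proof. by rewrite -IJ JJ (linN linI). Qed.
Lemma IK x : I (K x) = - J x. Proof. by rewrite -IJ II. Qed.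
Lemma KI x : K (I x) = J x. Proof. by rewrite -IJ JI (linN linI) IK opprK. Qed.

Let skewI := pairing_skew orthI II.
Let skewJ := pairing_skew orthJ JJ.
Let skewK := pairing_skew orthK KK.

(* Normalization: push I, J, K, the pairing, D and the Dorfman bracket
   through sums, opposites and scalings, and reduce products of I, J, K;
   pairings with Y are oriented so that Y comes last. *)
Ltac expand Y :=
  do 6 rewrite ?(linD linI) ?(linD linJ) ?(linD linK) ?(linN linI) ?(linN linJ)
    ?(linN linK) ?(lin0 linI) ?(lin0 linJ) ?(lin0 linK) ?(linMn linI)
    ?(linMn linJ) ?(linMn linK) ?(linZ linI) ?(linZ linJ) ?(linZ linK)
    ?II ?JJ ?KK ?IJ ?JK ?KI ?JI ?KJ ?IK
    ?dorf_addl ?dorf_addr ?dorfNl ?dorfNr ?dorfZl ?ca_leibniz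
    ?skewI ?skewJ ?skewK ?pairingNl ?pairingNr ?pairingDl ?pairingDr
    ?DopN ?DopD ?opprK ?(pairing_sym _ Y)
    ?scalerN ?scaleNr ?scalerDr -?scalerMnr ?mulrnDl.

Definition B X Y :=
  dorf (J Y) (I X) - J (dorf Y (I X)) - I (dorf (J Y) X) + J (I (dorf Y X)).

Lemma nabla0E X Y : nabla0 C I J K X Y = - (half A *: K (B X Y)).
Proof. by []. Qed.

Lemma B_addl X X' Y : B (X + X') Y = B X Y + B X' Y.
Proof. by rewrite /B; expand Y; zmod_eq. Qed.
Lemma B_addr X Y Y' : B X (Y + Y') = B X Y + B X Y'.
Proof. by rewrite /B; expand Y; zmod_eq. Qed.
Lemma B_scalr X Y (r : R) : B X (r%:A *: Y) = r%:A *: B X Y.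
Proof. by rewrite /B !(linZ linJ) !dorf_scall; expand Y; zmod_eq. Qed.
Lemma B_linl X Y f : B (f *: X) Y = f *: B X Y.
Proof. by rewrite /B; expand Y; zmod_eq. Qed.
(* The defect of A-linearity in Y is exactly the one of a hypercomplex
   connection. *)
Lemma B_leibniz X Y f : K (B X (f *: Y)) =
  f *: K (B X Y) + (Delta C I J K f X Y - anchor X f *: Y) *+ 2.
Proof. by rewrite /B /Delta; expand Y; zmod_eq. Qed.

Lemma nabla0_connection : hypercomplex_connection C I J K (nabla0 C I J K).
Proof.
split.
- by move=> X X' Y; rewrite !nabla0E B_addl (linD linK) scalerDr opprD.
- by move=> X Y Y'; rewrite !nabla0E B_addr (linD linK) scalerDr opprD.
- by move=> r X Y; rewrite !nabla0E B_scalr (linZ linK) scalerC scalerN.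
- by move=> f X Y; rewrite !nabla0E B_linl (linZ linK) scalerC scalerN.
- move=> f X Y; rewrite !nabla0E B_leibniz scalerDr half_double scalerC scalerN.
  by zmod_eq.
Qed.

Lemma nabla0_parallel (P : E -> E) : Alinear P ->
  (forall X Y, K (B X (P Y)) = P (K (B X Y))) -> parallel (nabla0 C I J K) P.
Proof.
move=> linP commP X Y.
by rewrite !nabla0E commP (linN linP) (linZ linP) subrr.
Qed.

(* J is parallel for nabla0, with no integrability assumption. *)
Lemma nabla0_parallel_J : parallel (nabla0 C I J K) J.
Proof.
by apply: nabla0_parallel => // X Y; apply: subr0_eq; rewrite /B; expand Y; zmod_zero.
Qed.

Definition star_term X Y :=
  I (Dop (pairing X (I Y))) + J (Dop (pairing X (J Y))) + K (Dop (pairing X (K Y))).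

Section Integrable.
Hypothesis NIJ : nij_vanish C I J.

Lemma KB_commute_I X Y : K (B X (I Y)) = I (K (B X Y)).
Proof.
have r1 := lin_eq0 linJ (NIJ Y X).
have r2 := lin_eq0 linK (NIJ (I Y) X).
apply: subr0_eq; move: r1 r2; rewrite /B /nijenhuis; expand Y => r1 r2.
by use_relation r1 1; use_relation r2 1; zmod_zero.
Qed.

Lemma KB_commute_K X Y : K (B X (K Y)) = K (K (B X Y)).
Proof.
have r1 := lin_eq0 linI (NIJ (I Y) X).
have r2 := NIJ Y X.
apply: subr0_eq; move: r1 r2; rewrite /B /nijenhuis; expand Y => r1 r2.
by use_relation r1 (-1); use_relation r2 1; zmod_zero.
Qed.

Lemma KB_antisym X Y :
  K (B Y X) - K (B X Y) = dorf X Y - dorf Y X + star_term X Y *+ 2.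
Proof.
have s1 := lin_eq0 linJ (eq_subr0 (dorf_sym X (J Y))).
have s2 := lin_eq0 linI (eq_subr0 (dorf_sym (I X) Y)).
have s3 := lin_eq0 linK (eq_subr0 (dorf_sym (I X) (J Y))).
have r1 := lin_eq0 linK (NIJ X Y).
apply: subr0_eq; move: s1 s2 s3 r1; rewrite /B /star_term /nijenhuis.
expand Y => s1 s2 s3 r1.
by use_relation s1 1; use_relation s2 (-1); use_relation r1 1;
  use_relation s3 (-1); zmod_zero.
Qed.

Lemma nabla0_torsion : torsion_star C I J K (nabla0 C I J K).
Proof.
move=> X Y; rewrite -/(star_term X Y) /torsion /courant !nabla0E.
have -> : star_term X Y =
    half A *: (K (B Y X) - K (B X Y) - (dorf X Y - dorf Y X)).
  by rewrite KB_antisym addrAC subrr add0r half_double.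
by rewrite !(scalerDr, scalerN); zmod_eq.
Qed.

Lemma nabla0_good : good_connection C I J K (nabla0 C I J K).
Proof.
split.
- exact: nabla0_connection.
- exact: nabla0_parallel linI KB_commute_I.
- exact: nabla0_parallel_J.
- exact: nabla0_parallel linK KB_commute_K.
- exact: nabla0_torsion.
Qed.

(* (ii) implies the vanishing of the other five Nijenhuis concomitants;
   each is an explicit integer combination of instances of N_{I,J}. *)
Lemma NJJ_of_NIJ : nij_vanish C J J.
Proof.
move=> X Y.
have r0 := lin_eq0 linI (NIJ X (J Y)).
have r1 := lin_eq0 linI (NIJ (J X) Y).
have r2 := lin_eq0 linK (NIJ (J X) (J Y)).
have r3 := lin_eq0 linK (NIJ X Y).
move: r0 r1 r2 r3; rewrite /nijenhuis; expand Y => r0 r1 r2 r3.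
by use_relation r0 1; use_relation r1 1; use_relation r2 (-1);
  use_relation r3 1; zmod_zero.
Qed.

Lemma NII_of_NIJ : nij_vanish C I I.
Proof.
move=> X Y.
have r0 := lin_eq0 linK (NIJ X Y).
have r1 := lin_eq0 linJ (NIJ (I X) Y).
have r2 := lin_eq0 linK (NIJ (I X) (I Y)).
have r3 := lin_eq0 linJ (NIJ X (I Y)).
move: r0 r1 r2 r3; rewrite /nijenhuis; expand Y => r0 r1 r2 r3.
by use_relation r0 (-1); use_relation r1 1; use_relation r2 1;
  use_relation r3 1; zmod_zero.
Qed.

Lemma NKK_of_NIJ : nij_vanish C K K.
Proof.
move=> X Y.
have r0 := NIJ (I X) (J Y).
have r1 := lin_eq0 linJ (NIJ (I X) Y).
have r2 := lin_eq0 linJ (NIJ X (I Y)).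
have r3 := lin_eq0 linK (NIJ (I X) (I Y)).
have r4 := lin_eq0 linI (NIJ (J X) Y).
have r5 := lin_eq0 linI (NIJ X (J Y)).
have r6 := lin_eq0 linK (NIJ (J X) (J Y)).
move: r0 r1 r2 r3 r4 r5 r6; rewrite /nijenhuis; expand Y.
move=> r0 r1 r2 r3 r4 r5 r6.
by use_relation r0 (-2); use_relation r1 (-1); use_relation r2 1;
  use_relation r3 (-1); use_relation r4 1; use_relation r5 (-1);
  use_relation r6 1; zmod_zero.
Qed.

Lemma NJK_of_NIJ : nij_vanish C J K.
Proof.
move=> X Y; have r0 := lin_eq0 linJ (NIJ (J X) (J Y)).
move: r0; rewrite /nijenhuis; expand Y => r0.
by use_relation r0 1; zmod_zero.
Qed.

Lemma NKI_of_NIJ : nij_vanish C K I.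
Proof.
move=> X Y; have r0 := lin_eq0 linI (NIJ (I X) (I Y)).
move: r0; rewrite /nijenhuis; expand Y => r0.
by use_relation r0 (-1); zmod_zero.
Qed.

Lemma hypercomplex_of_NIJ : hypercomplex C I J K.
Proof.
split=> //; do !split.
- exact NII_of_NIJ.
- exact NJJ_of_NIJ.
- exact NKK_of_NIJ.
- exact NIJ.
- exact NJK_of_NIJ.
- exact NKI_of_NIJ.
Qed.

End Integrable.

Section GoodConnection.
Variable nab : E -> E -> E.
Hypothesis good : good_connection C I J K nab.

Let nab_addr x y y' : nab x (y + y') = nab x y + nab x y'.
Proof. by case: good => [[]]. Qed.
Let nab_linl f x y : nab (f *: x) y = f *: nab x y.
Proof. by case: good => [[]]. Qed.
Let nabNl x y : nab (- x) y = - nab x y.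
Proof. by rewrite -scaleN1r nab_linl scaleN1r. Qed.
Let nabNr x y : nab x (- y) = - nab x y.
Proof.
have nab0 : nab x 0 = 0 by apply: double_eq0; rewrite -nab_addr addr0.
by apply/eqP; rewrite -subr_eq0 opprK -nab_addr addNr nab0.
Qed.
Let nabI x y : nab x (I y) = I (nab x y).
Proof. by case: good => _ parI _ _ _; apply: subr0_eq; apply: parI. Qed.
Let nabJ x y : nab x (J y) = J (nab x y).
Proof. by case: good => _ _ parJ _ _; apply: subr0_eq; apply: parJ. Qed.
Let nabK x y : nab x (K y) = K (nab x y).
Proof. by case: good => _ _ _ parK _; apply: subr0_eq; apply: parK. Qed.

Lemma dorf_from_connection a b :
  dorf a b = nab a b - nab b a + Dop (pairing a b) - star_term a b.
Proof.
case: good => _ _ _ _ /(_ a b) tor.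
have dorf_ba : dorf b a = Dop (pairing a b) *+ 2 - dorf a b.
  by rewrite (pairing_sym C a b) -dorf_sym addrK.
have antisym : dorf a b - dorf b a = (dorf a b - Dop (pairing a b)) *+ 2.
  by rewrite dorf_ba; zmod_eq.
rewrite /torsion /courant antisym half_double in tor.
apply: subr0_eq; use_relation (eq_subr0 tor) (-1); rewrite /star_term; zmod_zero.
Qed.

(* Eliminate every Dorfman bracket in favour of nab, then normalize. *)
Ltac expand_nab Y :=
  rewrite !dorf_from_connection /star_term;
  do 6 (expand Y; rewrite ?nabNl ?nabNr ?nabI ?nabJ ?nabK).

Lemma good_NIJ : nij_vanish C I J.
Proof. by move=> X Y; rewrite /nijenhuis; expand_nab Y; zmod_zero. Qed.
Lemma good_NJJ : nij_vanish C J J.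
Proof. by move=> X Y; rewrite /nijenhuis; expand_nab Y; zmod_zero. Qed.

Lemma good_eq_nabla0 X Y : nab X Y = nabla0 C I J K X Y.
Proof.
have KB_nab : K (B X Y) = - (nab X Y *+ 2).
  by apply: subr0_eq; rewrite opprK /B; expand_nab Y; zmod_zero.
by rewrite nabla0E KB_nab scalerN opprK half_double.
Qed.
End GoodConnection.

End AlmostHypercomplex.
End CourantAlgebra.

Unset Implicit Arguments. Set Strict Implicit.

Theorem mainTheorem1 (R : realFieldType) (A : comAlgType R) (E : lmodType A)
    (C : CourantAlgebroid E) (I J K : E -> E)
    (hIJK : almost_hypercomplex C I J K) :
  let P1 := nij_vanish C I J /\ nij_vanish C J J in
  let P2 := nij_vanish C I J in
  let P3 := hypercomplex C I J K in
  let P4 := exists nab, good_connection C I J K nab in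
  let P5 := exists nab, good_connection C I J K nab /\
              (forall nab', good_connection C I J K nab' ->
                 forall X Y, nab' X Y = nab X Y) /\
              (forall X Y, nab X Y = nabla0 C I J K X Y) in
  [/\ P1 <-> P2, P1 <-> P3, P1 <-> P4 & P1 <-> P5].
Proof.
move=> P1 P2 P3 P4 P5.
have P2_P1 : P2 -> P1 by move=> NIJ; split=> //; exact (NJJ_of_NIJ hIJK NIJ).
have good_P1 nab : good_connection C I J K nab -> P1.
  by move=> good; split; [exact (good_NIJ hIJK good) | exact (good_NJJ hIJK good)].
split; split.
- by case.
- exact: P2_P1.
- by case=> NIJ _; exact (hypercomplex_of_NIJ hIJK NIJ).
- by case=> _ [_ [NJJ [_ [NIJ _]]]].
- by move=> [NIJ _]; exists (nabla0 C I J K); exact (nabla0_good hIJK NIJ).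
- by case=> nab; exact: good_P1.
- move=> [NIJ _]; exists (nabla0 C I J K); split; first exact (nabla0_good hIJK NIJ).
  by split=> // nab' good' X Y; exact (good_eq_nabla0 hIJK good' X Y).
- by case=> nab [good _]; exact: good_P1 good.
Qed.
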